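(* Let $\mathbf{k}$ be a field with algebraic closure $\overline{\mathbf{k}}$, let $p\ge3$ and $q\ge1$ be integers, and fix values $e_1,\dots,e_{qp}\in\mathbf{k}$. Let $f_0=t^q+e_pt^{q-1}+\cdots+e_{(q-1)p}t+e_{qp}$ and $f_i=e_it^{q-1}+e_{p+i}t^{q-2}+\cdots+e_{(q-1)p+i}$ for $1\le i\le p-1$, as polynomials in $\mathbf{k}[t]$. Then $f_0,f_1,\dots,f_{p-1}$ have a common root in $\overline{\mathbf{k}}$ if and only if for every $\mu=(\mu_1,\dots,\mu_{p-1})\in\overline{\mathbf{k}}^{p-1}$, the polynomials $f_0$ and $h_\mu=\sum_{i=1}^{p-1}\mu_if_i$ have a common root in $\overline{\mathbf{k}}$. *)

From HB Require Import structures.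
From mathcomp Require Import all_boot all_order all_algebra.
Set Implicit Arguments. Unset Strict Implicit. Unset Printing Implicit Defensive.
Import GRing.Theory.
Local Open Scope ring_scope.

Definition is_algebraic_closure (k : fieldType) (L : closedFieldType)
  (iota : {rmorphism k -> L}) : Prop :=
  forall x : L, exists2 P : {poly k}, P != 0 & root (map_poly iota P) x.

(* e : nat -> k, only the values e 1, ..., e (q*p) are used. *)
Definition f0 (k : fieldType) (e : nat -> k) (p q : nat) : {poly k} :=
  'X^q + \sum_(1 <= j < q.+1) e (j * p)%N *: 'X^(q - j).

Definition fi (k : fieldType) (e : nat -> k) (p q i : nat) : {poly k} :=
  \sum_(j < q) e (j * p + i)%N *: 'X^(q.-1 - j).

From HB Require Import structures.
From mathcomp Require Import all_boot all_order all_algebra.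
From mathcomp Require Import zify.
Import GRing.Theory.
Local Open Scope ring_scope.

(* If no root x of f_0 is a common root of the f_i, the vectors
   v_x = (f_1(x), ..., f_(p-1)(x)) are finitely many nonzero vectors over an
   infinite field, so some mu is orthogonal to none of them: take mu on the
   moment curve (1, t, t^2, ...), where t avoids the roots of the nonzero
   polynomials sum_i (v_x)_i X^i.  Then h_mu has no root in common with f_0. *)

Lemma coef_f0_deg (k : fieldType) (e : nat -> k) (p q : nat) : (f0 e p q)`_q = 1.
Proof.
rewrite /f0 coefD coefXn eqxx coef_sum big1_seq ?addr0 // => j.
rewrite mem_index_iota coefZ coefXn => /andP[_ /andP[j_gt0 j_le_q]].
by rewrite (_ : (q == q - j)%N = false) ?mulr0 //; lia.
Qed.

Lemma f0_neq0 (k : fieldType) (e : nat -> k) (p q : nat) : f0 e p q != 0.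
Proof.
apply: contra_neq (@oner_neq0 k) => f0_eq0.
by rewrite -(coef_f0_deg _ e p q) f0_eq0 coef0.
Qed.

Lemma closed_poly_roots (L : closedFieldType) (P : {poly L}) :
  P != 0 -> exists rs : seq L, forall x, root P x = (x \in rs).
Proof.
move=> P_neq0; have [rs Prs] := closed_field_poly_normal P.
by exists rs => x; rewrite Prs rootZ ?lead_coef_eq0 // root_prod_XsubC.
Qed.

Lemma mem0_of_orthogonal_cover (L : closedFieldType) (n : nat) (vs : seq 'rV[L]_n) :
  (forall mu : 'rV[L]_n, exists2 v, v \in vs & \sum_i mu 0 i * v 0 i = 0) ->
  0 \in vs.
Proof.
move=> cover; apply: contraT => vs_neq0.
have rVpoly_neq0 v : v \in vs -> rVpoly v != 0.
  by apply: contraTneq => /(congr1 (@poly_rV _ n)); rewrite rVpolyK linear0 => ->.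
have [t] : exists t, ~~ root (\prod_(v <- vs) rVpoly v) t.
  by apply/closed_nonrootP; rewrite prodf_seq_neq0; apply/allP.
rewrite -(big_map rVpoly xpredT id) root_bigmul => /allP t_nonroot.
have [v vs_v] := cover (\row_i t ^+ i).
have size_v : (size (rVpoly v) <= n)%N by apply: size_poly.
under eq_bigr do rewrite mxE mulrC -coef_rVpoly_ord.
rewrite -(horner_coef_wide _ size_v) => /eqP v_root.
by have := t_nonroot _ (map_f rVpoly vs_v); rewrite rootE v_root.
Qed.

Theorem lemma4p3 (k : fieldType) (L : closedFieldType)
  (iota : {rmorphism k -> L}) (hL : is_algebraic_closure iota)
  (p q : nat) (hp : (3 <= p)%N) (hq : (1 <= q)%N) (e : nat -> k) :
  (exists x : L, root (map_poly iota (f0 e p q)) x /\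
     forall i : nat, (1 <= i <= p.-1)%N -> root (map_poly iota (fi e p q i)) x)
  <->
  (forall mu : 'rV[L]_(p.-1),
     exists x : L, root (map_poly iota (f0 e p q)) x /\
       root (\sum_(i < p.-1) mu ord0 i *: map_poly iota (fi e p q i.+1)) x).
Proof.
set F := map_poly iota (f0 e p q); set G := fun i => map_poly iota (fi e p q i).
split=> [[x [Fx Gx]] mu | cover].
  exists x; split=> //; rewrite rootE horner_sum big1 // => i _.
  by rewrite hornerZ (eqP (Gx i.+1 (ltn_ord i))) mulr0.
have [rs rootF] : exists rs : seq L, forall x, root F x = (x \in rs).
  by apply: closed_poly_roots; rewrite map_poly_eq0 f0_neq0.
pose v x := \row_(i < p.-1) (G i.+1).[x].
have /mapP[x rs_x v_x0] : 0 \in map v rs.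
  apply: mem0_of_orthogonal_cover => mu; have [x [Fx /eqP hmu_x]] := cover mu.
  exists (v x); first by rewrite map_f -?rootF.
  by rewrite -[RHS]hmu_x horner_sum; apply: eq_bigr => i _; rewrite hornerZ mxE.
exists x; split=> [|i /andP[i_gt0 i_le]]; first by rewrite rootF.
have i_lt : (i.-1 < p.-1)%N by lia.
move/rowP/(_ (Ordinal i_lt)): v_x0; rewrite !mxE /= prednK // => Gx0.
by rewrite rootE -Gx0.
Qed.
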